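(* Let $\nu$ be a continuous valuation on a topological space $X$ such that $\mathrm{Val}(\nu)=\{\nu(U):U\in\mathcal OX,\ \nu(U)\neq0,+\infty\}$ has a least element $r$. Then there is an irreducible closed subset $C$ of $X$ such that (1) $\nu'=\nu-r\,e_C$ is a continuous valuation, and (2) $\mathrm{Val}(\nu')\subseteq\{v-r:v\in\mathrm{Val}(\nu),\ v\neq r\}$.
   Context: A continuous valuation is a map $\nu:\mathcal OX\to[0,\infty]$ with $\nu(\emptyset)=0$, monotone, modular, preserving directed suprema of opens. A non-empty subset is irreducible if it is not contained in a union of two closed sets without being contained in one of them. For irreducible closed $C$, $e_C(U)=1$ if $U\cap C\neq\emptyset$ and $0$ otherwise. The difference $\nu-r\,e_C$ is pointwise, with $+\infty-r=+\infty$. *)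

From HB Require Import structures.
From mathcomp Require Import all_boot all_order all_algebra.
From mathcomp Require Import all_classical all_reals all_analysis.
Set Implicit Arguments. Unset Strict Implicit. Unset Printing Implicit Defensive.
Import Order.TTheory GRing.Theory Num.Theory.
Local Open Scope classical_set_scope.
Local Open Scope ereal_scope.

Section Defs.
Variables (R : realType) (T : topologicalType).

Definition directed_opens (F : set (set T)) : Prop :=
  (F `<=` open) /\ F !=set0 /\
  (forall U V, F U -> F V -> exists2 W, F W & U `|` V `<=` W).

(* Continuous valuation nu : O(X) -> [0, +oo]; only its values on opens matter. *)
Definition continuous_valuation (nu : set T -> \bar R) : Prop :=
  [/\ nu set0 = 0,
      (forall U, open U -> 0 <= nu U),
      (forall U V, open U -> open V -> U `<=` V -> nu U <= nu V),
      (forall U V, open U -> open V -> nu U + nu V = nu (U `|` V) + nu (U `&` V))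
    & (forall F, directed_opens F ->
         nu (\bigcup_(U in F) U) = ereal_sup [set nu U | U in F])].

Definition Val (nu : set T -> \bar R) : set (\bar R) :=
  [set v | exists2 U, open U & [/\ nu U = v, v != 0 & v != +oo]].

Definition irreducible (C : set T) : Prop :=
  C !=set0 /\
  (forall A B, closed A -> closed B -> C `<=` A `|` B -> C `<=` A \/ C `<=` B).

Definition e_pt (C : set T) (U : set T) : \bar R :=
  if pselect (U `&` C !=set0) then 1 else 0.

Definition val_sub (nu : set T -> \bar R) (r : \bar R) (C : set T) : set T -> \bar R :=
  fun U => nu U - r * e_pt C U.

End Defs.

From HB Require Import structures.
From mathcomp Require Import all_boot all_order all_algebra.
From mathcomp Require Import all_classical all_reals all_analysis.
From mathcomp Require Import lra.
Set Implicit Arguments. Unset Strict Implicit. Unset Printing Implicit Defensive.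
Import Order.TTheory GRing.Theory Num.Theory.
Local Open Scope classical_set_scope.
Local Open Scope ereal_scope.

(* Pick an open U0 with nu(U0) = r.  The restriction mu = nu(- `&` U0) is a
   continuous valuation with values in {0, r}: it is bounded by r, and a
   nonzero value lies in Val(nu).  Let C be its support, the complement of
   the largest mu-null open set.  An open set meets C iff its mu-value is r,
   so mu = r e_C, and C is irreducible: opens U, V meeting C with U `&` V
   missing it would give 2r = mu(U `|` V), which is 0 or r.  Hence
   nu - r e_C = nu - mu, a continuous valuation because mu is finite, and by
   modularity its value v on an open U satisfies v + r = nu(U `|` U0). *)

Lemma irreducible_meetsI (T : topologicalType) (C : set T) : C !=set0 ->
    (forall U V, open U -> open V ->
       U `&` C !=set0 -> V `&` C !=set0 -> U `&` V `&` C !=set0) ->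
  irreducible C.
Proof.
move=> C0 meetsI; split=> // A B cA cB CAB.
apply: contrapT => /not_orP[/existsNP[x /not_implyP[Cx Ax]]
                            /existsNP[y /not_implyP[Cy By]]].
have [z [[Az Bz] Cz]] := meetsI _ _ (closed_openC cA) (closed_openC cB)
  (ex_intro _ x (conj Ax Cx)) (ex_intro _ y (conj By Cy)).
by case: (CAB z Cz).
Qed.

Section ValuationsOnOpens.
Variables (R : realType) (T : topologicalType) (nu nu' : set T -> \bar R).
Hypothesis nu_nu' : forall U, open U -> nu U = nu' U.

Lemma eq_cval : continuous_valuation nu -> continuous_valuation nu'.
Proof.
case=> nu0 nu_ge0 nu_le nu_mod nu_sup; split.
- by rewrite -(nu_nu' open0).
- by move=> U oU; rewrite -(nu_nu' oU); exact: nu_ge0.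
- by move=> U V oU oV UV; rewrite -(nu_nu' oU) -(nu_nu' oV); exact: nu_le.
- move=> U V oU oV.
  rewrite -(nu_nu' oU) -(nu_nu' oV) -(nu_nu' (openU oU oV)) -(nu_nu' (openI oU oV)).
  exact: nu_mod.
- move=> F dF; have Fo : F `<=` open by case: dF.
  have oF : open (\bigcup_(U in F) U) by exact: bigcup_open.
  rewrite -(nu_nu' oF) nu_sup //; congr ereal_sup.
  by apply/seteqP; split=> _ [U FU <-]; exists U; rewrite // (nu_nu' (Fo U FU)).
Qed.

Lemma eq_Val : Val nu = Val nu'.
Proof.
apply/seteqP; split=> v [U oU];
  by [rewrite (nu_nu' oU) => ?; exists U | rewrite -(nu_nu' oU) => ?; exists U].
Qed.

End ValuationsOnOpens.

Section Restriction.
Variables (R : realType) (T : topologicalType) (nu : set T -> \bar R) (D : set T).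
Hypotheses (nu_cv : continuous_valuation nu) (oD : open D).

Let nu_ge0 U : open U -> 0 <= nu U. Proof. by case: nu_cv => _ + _ _ _; apply. Qed.
Let nu_le U V : open U -> open V -> U `<=` V -> nu U <= nu V.
Proof. by case: nu_cv => _ _ + _ _; apply. Qed.
Let nu_mod U V : open U -> open V -> nu U + nu V = nu (U `|` V) + nu (U `&` V).
Proof. by case: nu_cv => _ _ _ + _; apply. Qed.

Definition vrestr : set T -> \bar R := fun U => nu (U `&` D).

Lemma cval_vrestr : continuous_valuation vrestr.
Proof.
case: nu_cv => nu0 _ _ _ nu_sup; rewrite /vrestr; split.
- by rewrite set0I.
- by move=> U oU; apply: nu_ge0; exact: openI.
- by move=> U V oU oV UV; apply: nu_le; [exact: openI|exact: openI|exact: setSI].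
- move=> U V oU oV; rewrite nu_mod; [|exact: openI|exact: openI].
  by rewrite -setIUl setIACA setIid.
- move=> F [Fo [[U0 FU0] Fdir]]; rewrite setI_bigcupl -bigcup_image nu_sup.
    by rewrite image_comp.
  split; first by move=> _ [U FU <-]; apply: openI => //; exact: Fo.
  split; first by exists (U0 `&` D), U0.
  move=> _ _ [U FU <-] [V FV <-]; have [W FW UVW] := Fdir U V FU FV.
  by exists (W `&` D); [exists W | rewrite -setIUl; exact: setSI].
Qed.

Lemma vrestr_two_valued (r : R) : nu D = r%:E ->
    (forall v, Val nu v -> r%:E <= v) ->
  forall U, open U -> vrestr U = 0 \/ vrestr U = r%:E.
Proof.
move=> nuD nuD_min U oU; have oUD := openI oU oD.
have le_r : vrestr U <= r%:E by rewrite -nuD; apply: nu_le => //; exact: subIsetr.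
have [->|restr_neq0] := eqVneq (vrestr U) 0; [by left | right].
apply/le_anti; rewrite le_r nuD_min //; exists (U `&` D) => //.
by split=> //; rewrite -ltey (le_lt_trans le_r) ?ltry.
Qed.

Hypothesis nuD_fin : nu D < +oo.

Lemma fin_num_vrestr U : open U -> vrestr U \is a fin_num.
Proof.
move=> oU; have oUD := openI oU oD.
rewrite ge0_fin_numE; last exact: nu_ge0.
by apply: le_lt_trans nuD_fin; apply: nu_le => //; exact: subIsetr.
Qed.

Definition vrestrC : set T -> \bar R := fun U => nu U - vrestr U.

Lemma le_vrestrC U V : open U -> open V -> U `<=` V -> vrestrC U <= vrestrC V.
Proof.
move=> oU oV UV; have oVD := openI oV oD.
rewrite /vrestrC leeBrDr ?fin_num_vrestr // addeAC leeBlDr ?fin_num_vrestr //.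
have UVD : U `&` (V `&` D) = U `&` D by rewrite setIA; congr (_ `&` D); exact/setIidPl.
rewrite /vrestr (nu_mod oU oVD) UVD; apply: leeD2r; apply: nu_le => //.
  exact: openU.
by move=> x [|[]]; [exact: UV|].
Qed.

Lemma cval_vrestrC : continuous_valuation vrestrC.
Proof.
have [restr0 _ _ restr_mod _] := cval_vrestr.
case: nu_cv => nu0 _ _ _ nu_sup; split.
- by rewrite /vrestrC restr0 nu0 sube0.
- move=> U oU; rewrite /vrestrC sube_ge0 ?fin_num_vrestr //.
  by apply: nu_le; [exact: openI|done|exact: subIsetl].
- exact: le_vrestrC.
- move=> U V oU oV; rewrite /vrestrC.
  rewrite addeACA -oppeD ?fin_num_adde_defl ?fin_num_vrestr //.
  rewrite nu_mod // restr_mod // addeACA -oppeD ?fin_num_adde_defl ?fin_num_vrestr //.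
  exact: openI.
- move=> F dF; have Fo : F `<=` open by case: dF.
  have oF : open (\bigcup_(U in F) U) by exact: bigcup_open.
  apply/le_anti/andP; split; last first.
    apply: ge_ereal_sup => _ [U FU <-]; apply: le_vrestrC => //; first exact: Fo.
    exact: bigcup_sup.
  rewrite /vrestrC leeBlDr ?fin_num_vrestr // nu_sup //.
  apply: ge_ereal_sup => _ [U FU <-].
  (* nu U = vrestrC U + vrestr U, and vrestr grows from U to the union. *)
  rewrite -(subeK (nu U) (fin_num_vrestr (Fo U FU))); apply: leeD.
    by apply: ereal_sup_ubound; exists U.
  apply: nu_le; [exact: openI (Fo U FU) oD|exact: openI oF oD|].
  by apply: setSI; exact: bigcup_sup.
Qed.

Lemma Val_vrestrC :
  Val vrestrC `<=` [set v - nu D | v in [set v | Val nu v /\ v != nu D]].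
Proof.
have [_ vC_ge0 _ _ _] := cval_vrestrC.
have finD : nu D \is a fin_num by rewrite ge0_fin_numE ?nu_ge0.
move=> _ [U oU [<- v0 voo]].
have fin_v : vrestrC U \is a fin_num by rewrite ge0_fin_numE ?vC_ge0 // ltey.
have nuUD : nu (U `|` D) = vrestrC U + nu D.
  by rewrite /vrestrC addeAC nu_mod // (addeK _ (fin_num_vrestr oU)).
exists (vrestrC U + nu D); last by rewrite addeK.
split; last first.
  by apply: contra v0 => /eqP vD; rewrite -[vrestrC U](addeK _ finD) vD subee.
exists (U `|` D); first exact: openU.
split=> //; first by rewrite padde_eq0 ?vC_ge0 ?nu_ge0 // negb_and v0.
have : vrestrC U + nu D \is a fin_num by rewrite fin_numD fin_v finD.
by rewrite fin_numE => /andP[].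
Qed.

End Restriction.

Section Support.
Variables (R : realType) (T : topologicalType) (mu : set T -> \bar R).

Definition null_open : set (set T) := [set V | open V /\ mu V = 0].

Definition vsupport : set T := ~` \bigcup_(V in null_open) V.

Lemma closed_vsupport : closed vsupport.
Proof. by apply: open_closedC; apply: bigcup_open => V []. Qed.

Hypothesis mu_cv : continuous_valuation mu.

Let mu_ge0 U : open U -> 0 <= mu U. Proof. by case: mu_cv => _ + _ _ _; apply. Qed.
Let mu_le U V : open U -> open V -> U `<=` V -> mu U <= mu V.
Proof. by case: mu_cv => _ _ + _ _; apply. Qed.
Let mu_mod U V : open U -> open V -> mu U + mu V = mu (U `|` V) + mu (U `&` V).
Proof. by case: mu_cv => _ _ _ + _; apply. Qed.

Lemma null_openU U V : null_open U -> null_open V -> null_open (U `|` V).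
Proof.
move=> [oU U0] [oV V0]; split; first exact: openU.
have := mu_mod oU oV; rewrite U0 V0 adde0 => /esym sum0.
apply/le_anti; rewrite mu_ge0 ?andbT; last exact: openU.
by rewrite -sum0 leeDl // mu_ge0 //; exact: openI.
Qed.

Lemma null_open_bigcup : null_open (\bigcup_(V in null_open) V).
Proof.
case: mu_cv => mu0 _ _ _ mu_sup.
have oW : open (\bigcup_(V in null_open) V) by apply: bigcup_open => V [].
split=> //; apply/le_anti; rewrite mu_ge0 // andbT mu_sup.
  by apply: ge_ereal_sup => _ [V [_ V0] <-]; rewrite V0.
split; first by move=> V [].
split; first by exists set0; split; [exact: open0|].
by move=> U V NU NV; exists (U `|` V) => //; exact: null_openU.
Qed.

Lemma vsupport_meets U : open U -> U `&` vsupport !=set0 <-> mu U != 0.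
Proof.
move=> oU; split.
  by move=> [x [Ux Cx]]; apply/eqP => U0; apply: Cx; exists U.
move=> /eqP muU; apply: contrapT => UC; apply: muU.
have [oW W0] := null_open_bigcup.
apply/le_anti; rewrite mu_ge0 // andbT -W0; apply: mu_le => // x Ux.
by apply: contrapT => Wx; apply: UC; exists x.
Qed.

Section TwoValued.
Variable r : R.
Hypotheses (r_gt0 : (0 < r)%R) (mu_two : forall U, open U -> mu U = 0 \/ mu U = r%:E).

Lemma vsupport_e_pt U : open U -> mu U = r%:E * e_pt R vsupport U.
Proof.
move=> oU; rewrite /e_pt; case: pselect => UC.
  by rewrite mule1; move/(vsupport_meets oU): UC; case: (mu_two oU) => ->; rewrite ?eqxx.
rewrite mule0; apply: contrapT => muU; apply: UC.
by apply/(vsupport_meets oU); exact/eqP.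
Qed.

Lemma vsupport_meetsI U V : open U -> open V ->
  U `&` vsupport !=set0 -> V `&` vsupport !=set0 -> U `&` V `&` vsupport !=set0.
Proof.
have mu_r W : open W -> mu W != 0 -> mu W = r%:E.
  by move=> oW; case: (mu_two oW) => ->; rewrite ?eqxx.
move=> oU oV /(vsupport_meets oU)/(mu_r _ oU) muU /(vsupport_meets oV)/(mu_r _ oV) muV.
apply/(vsupport_meets (openI oU oV)); apply/eqP => muUV.
have := mu_mod oU oV; rewrite muU muV muUV adde0 -EFinD.
by case: (mu_two (openU oU oV)) => -> /eqP; rewrite eqe => /eqP; move: r_gt0; lra.
Qed.

Lemma irreducible_vsupport : mu setT != 0 -> irreducible vsupport.
Proof.
move=> /(vsupport_meets openT)[x [_ Cx]].
by apply: irreducible_meetsI; [exists x | exact: vsupport_meetsI].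
Qed.

End TwoValued.
End Support.

Theorem lemma4p2 (R : realType) (T : topologicalType) (nu : set T -> \bar R)
    (r : \bar R) :
  continuous_valuation nu ->
  Val nu r -> (forall v, Val nu v -> r <= v) ->
  exists C : set T,
    [/\ closed C, irreducible C,
        continuous_valuation (val_sub nu r C)
      & Val (val_sub nu r C) `<=` [set v - r | v in [set v | Val nu v /\ v != r]]].
Proof.
move=> nu_cv [U0 oU0 [<- nuU0_neq0 nuU0_fin]] nuU0_min {r}.
have [_ nu_ge0 _ _ _] := nu_cv.
have [r nuU0] : exists r, nu U0 = r%:E.
  by move: nuU0_fin (nu_ge0 _ oU0); case: (nu U0) => // r _ _; exists r.
have r_gt0 : (0 < r)%R.
  rewrite lt0r -lee_fin -nuU0 nu_ge0 // andbT.
  by move: nuU0_neq0; rewrite nuU0.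
rewrite nuU0 in nuU0_min.
have mu_two := vrestr_two_valued nu_cv oU0 nuU0 nuU0_min.
have mu_cv := cval_vrestr nu_cv oU0.
set C := vsupport (vrestr nu U0).
have nu'E U : open U -> vrestrC nu U0 U = val_sub nu (nu U0) C U.
  by move=> oU; rewrite /val_sub /vrestrC nuU0 (vsupport_e_pt mu_cv mu_two oU).
have nuU0_lt : nu U0 < +oo by rewrite nuU0 ltry.
exists C; split.
- exact: closed_vsupport.
- apply: (irreducible_vsupport mu_cv r_gt0 mu_two).
  by rewrite /vrestr setTI nuU0 eqe gt_eqF.
- exact: eq_cval nu'E (cval_vrestrC nu_cv oU0 nuU0_lt).
- by rewrite -(eq_Val nu'E); exact: Val_vrestrC.
Qed.
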